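(* Let $d,d'\ge 1$, let $\{\ket{\Phi_b}\}_{b=1}^{dd'}$ be an orthonormal basis of $\mathbb{C}^{d}\otimes\mathbb{C}^{d'}$, and let $\ket\psi\in\mathbb{C}^{d'}$ be a unit vector. Define the operators on $\mathbb{C}^d$ $$\mu_b=(I\otimes\bra\psi)\,\ket{\Phi_b}\!\bra{\Phi_b}\,(I\otimes\ket\psi),\qquad b=1,\dots,dd'.$$ Then $s_{\boldsymbol\mu}\equiv\dim\operatorname{span}(\{\mu_b\}_{b=1}^{dd'})\ge d$.
   Context: The family $\boldsymbol\mu=(\mu_b)_b$ is a POVM on $\mathbb{C}^d$ (positive operators summing to the identity). The span is the complex linear span inside the space of linear operators on $\mathbb{C}^d$. *)

(* Complex scalars: an arbitrary numClosedFieldType C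
   (e.g. the complex numbers); conjugation is Num.conj ( ^* ). *)
From HB Require Import structures.
From mathcomp Require Import all_boot all_order all_algebra.
Set Implicit Arguments. Unset Strict Implicit. Unset Printing Implicit Defensive.
Import Order.TTheory GRing.Theory Num.Theory.
Local Open Scope ring_scope.

(* C^d (x) C^d' is modelled as 'cV_(d*d'), the basis vector |i>|j>
   corresponding to index mxvec_index i j. *)

(* (I (x) <psi|) |Phi>  as a column vector in C^d *)
Definition partial_bra (C : numClosedFieldType) (d d' : nat)
  (psi : 'cV[C]_d') (Phi : 'cV[C]_(d * d')) : 'cV[C]_d :=
  \col_(i < d) \sum_(j < d') (psi j 0)^* * Phi (mxvec_index i j) 0.

Definition adjmx (C : numClosedFieldType) m n (A : 'M[C]_(m, n)) : 'M[C]_(n, m) :=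
  (map_mx Num.conj A)^T.

Definition mu_op (C : numClosedFieldType) (d d' : nat)
  (psi : 'cV[C]_d') (Phi : 'cV[C]_(d * d')) : 'M[C]_d :=
  partial_bra psi Phi *m adjmx (partial_bra psi Phi).

(* Write v_b := (I (x) <psi|) |Phi_b>, so that mu_b = v_b v_b^*.  Completeness
   of the orthonormal basis gives sum_b mu_b = <psi|psi> I = I, hence the matrix
   V with columns v_b satisfies V V^* = I and has rank d.  Pick d columns of V
   forming an invertible matrix X; the rank-one operators x_i x_i^* are then
   linearly independent, since sum_i c_i x_i x_i^* = X diag(c) X^* vanishes only
   if diag(c) does. *)

From mathcomp Require Import all_boot all_algebra.

Set Implicit Arguments.
Unset Strict Implicit.
Unset Printing Implicit Defensive.

Import GRing.Theory Num.Theory.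
Local Open Scope ring_scope.

Lemma mulmx_sum_col_row (R : pzRingType) m n p
    (A : 'M[R]_(m, n)) (B : 'M_(n, p)) :
  A *m B = \sum_(k < n) col k A *m row k B.
Proof.
apply/matrixP=> i j; rewrite !mxE summxE; apply: eq_bigr => k _.
by rewrite !mxE big_ord1 !mxE.
Qed.

Lemma unitmx_col_neq0 (F : fieldType) n (A : 'M[F]_n) i :
  A \in unitmx -> col i A != 0.
Proof.
move=> Au; apply/eqP; rewrite colE => A_delta0.
have /matrixP /(_ i 0) := mulKmx Au (delta_mx i 0 : 'cV_n).
by rewrite A_delta0 mulmx0 !mxE !eqxx => /eqP; rewrite eq_sym oner_eq0.
Qed.

Lemma exists_unit_colsub (F : fieldType) m n (A : 'M[F]_(m, n)) :
  row_free A -> exists f : 'I_m -> 'I_n, colsub f A \in unitmx.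
Proof.
move=> Afree; have AtrF : row_full A^T by rewrite /row_full mxrank_tr.
exists (fullrankfun AtrF); rewrite -unitmx_tr.
have -> : (colsub (fullrankfun AtrF) A)^T = rowsub (fullrankfun AtrF) A^T.
  by apply/matrixP=> i j; rewrite !mxE.
exact: fullrowsub_unit.
Qed.

Lemma free_col_mul_row (F : fieldType) m k n
    (X : 'M[F]_(m, k)) (Y : 'M_(k, n)) :
  (forall i, col i X != 0) -> row_free Y ->
  free (mktuple (fun i => col i X *m row i Y)).
Proof.
move=> Xcol_neq0 Yfree; apply/freeP => c sum_c0 i.
have col_XD j : col j (X *m diag_mx (\row_l c l)) = c j *: col j X.
  by apply/colP=> l; rewrite mul_mx_diag !mxE mulrC.
have XD0 : X *m diag_mx (\row_l c l) = 0.
  apply/eqP; rewrite -(mulmx_free_eq0 _ Yfree) mulmx_sum_col_row.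
  rewrite -[X in _ == X]sum_c0.
  by apply/eqP/eq_bigr => j _; rewrite col_XD nth_mktuple scalemxAl.
have /eqP := col_XD i; rewrite XD0 col0 eq_sym scaler_eq0.
by rewrite (negbTE (Xcol_neq0 i)) orbF => /eqP.
Qed.

Lemma row_adjmx (C : numClosedFieldType) m n (A : 'M[C]_(m, n)) i :
  row i (adjmx A) = adjmx (col i A).
Proof. by apply/rowP=> j; rewrite !mxE. Qed.

Lemma adjmx_unit (C : numClosedFieldType) n (A : 'M[C]_n) :
  (adjmx A \in unitmx) = (A \in unitmx).
Proof. by rewrite unitmx_tr map_unitmx. Qed.

Lemma row_free_dim_span_col_adj (C : numClosedFieldType) m n
    (V : 'M[C]_(m, n)) :
  row_free V ->
  (m <= \dim (span [seq col b V *m adjmx (col b V) | b <- enum 'I_n]))%N.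
Proof.
move=> /exists_unit_colsub [f Xu]; set X := colsub f V in Xu.
set T := mktuple (fun i => col i X *m row i (adjmx X)).
have freeT : free T.
  apply: free_col_mul_row => [i|]; first exact: unitmx_col_neq0.
  by rewrite row_free_unit adjmx_unit.
rewrite -{1}(size_tuple T) -(eqP freeT).
apply/dimvS/sub_span => _ /mapP [i _ ->].
by rewrite row_adjmx col_colsub; apply/mapP; exists (f i); rewrite ?mem_enum.
Qed.

Lemma orthonormal_basis_complete (C : numClosedFieldType) n
    (Phi : 'I_n -> 'cV[C]_n) :
  (forall b b', \sum_(k < n) (Phi b k 0)^* * Phi b' k 0 = (b == b')%:R) ->
  forall k k', \sum_(b < n) Phi b k 0 * (Phi b k' 0)^* = (k == k')%:R.
Proof.
move=> orthoPhi k k'.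
pose U := \matrix_(k, b) Phi b k 0.
have UU : adjmx U *m U = 1.
  apply/matrixP=> b b'; rewrite !mxE -orthoPhi.
  by apply: eq_bigr => l _; rewrite !mxE.
have /matrixP /(_ k k') := mulmx1C UU.
by rewrite !mxE => <-; apply: eq_bigr => b _; rewrite !mxE.
Qed.

Lemma eq_mxvec_index m n (i i' : 'I_m) (j j' : 'I_n) :
  (mxvec_index i j == mxvec_index i' j') = (i == i') && (j == j').
Proof.
by rewrite (inj_eq (@cast_ord_inj _ _ _)) (inj_eq (@enum_rank_inj _)) xpair_eqE.
Qed.

Lemma sum_mu_op (C : numClosedFieldType) d d' (psi : 'cV[C]_d')
    (Phi : 'I_(d * d') -> 'cV[C]_(d * d')) :
  (forall k k', \sum_b Phi b k 0 * (Phi b k' 0)^* = (k == k')%:R) ->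
  \sum_b mu_op psi (Phi b) = (\sum_(j < d') (psi j 0)^* * psi j 0)%:M.
Proof.
move=> completePhi; apply/matrixP => i i'; rewrite summxE.
have mu_entry b : mu_op psi (Phi b) i i' =
    \sum_j \sum_j' (psi j 0)^* * psi j' 0 *
      (Phi b (mxvec_index i j) 0 * (Phi b (mxvec_index i' j') 0)^*).
  rewrite !mxE big_ord1 !mxE rmorph_sum mulr_suml; apply: eq_bigr => j _.
  rewrite mulr_sumr; apply: eq_bigr => j' _.
  by rewrite rmorphM /= conjCK mulrACA.
under eq_bigr do rewrite mu_entry.
rewrite exchange_big; under eq_bigr do rewrite exchange_big.
under eq_bigr do under eq_bigr do rewrite -mulr_sumr completePhi eq_mxvec_index.
rewrite mxE; have [_|_] := eqVneq i i'; last first.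
  by rewrite big1 // => j _; rewrite big1 // => j' _; rewrite mulr0.
apply: eq_bigr => j _; rewrite (bigD1 j) //= eqxx mulr1 big1 ?addr0 //.
by move=> j' ne_j'j; rewrite eq_sym (negbTE ne_j'j) mulr0.
Qed.

Theorem lemma1 (C : numClosedFieldType) (d d' : nat)
  (Phi : 'I_(d * d') -> 'cV[C]_(d * d')) (psi : 'cV[C]_d') :
  (0 < d)%N -> (0 < d')%N ->
  (forall b b' : 'I_(d * d'),
      \sum_(k < d * d') (Phi b k 0)^* * Phi b' k 0 = (b == b')%:R) ->
  \sum_(j < d') (psi j 0)^* * psi j 0 = 1 ->
  (d <= \dim (span [seq mu_op psi (Phi b) | b <- enum 'I_(d * d')]))%N.
Proof.
move=> _ _ orthoPhi normpsi.
pose V := \matrix_(i, b) partial_bra psi (Phi b) i 0.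
have colV b : col b V = partial_bra psi (Phi b) by apply/colP=> i; rewrite !mxE.
have VV : V *m adjmx V = 1%:M.
  rewrite mulmx_sum_col_row; under eq_bigr do rewrite row_adjmx colV.
  by rewrite (sum_mu_op psi (orthonormal_basis_complete orthoPhi)) normpsi.
have Vfree : row_free V.
  by rewrite /row_free eqn_leq rank_leq_row -{1}(mxrank1 C d) -VV mxrankM_maxl.
have := row_free_dim_span_col_adj Vfree.
by under eq_map do rewrite colV.
Qed.
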